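(* Let $\alpha=1/10$ and $V(\mathbf{y})=1+\sum_{i=1}^{n-1}\alpha^iy_i$ for $\mathbf{y}\in\mathbb{R}_+^{n-1}$. Then for all $\mathbf{y}\in\mathbb{R}_+^{n-1}$, $$\mathcal{L}_nV(\mathbf{y})\le\alpha-\frac{1-\alpha}{2}\sum_{i=1}^{n-1}\alpha^iy_i^2,$$ and consequently $\mathcal{L}_nV(\mathbf{y})\le\alpha-\frac{(1-\alpha)^2}{2\alpha}(V(\mathbf{y})-1)^2$.
   Context: Fix $n\ge2$ and a probability law $\theta$ on $(0,\infty)$ with $\int z\,\theta(dz)=1$. $\mathcal{L}_n$ is the generator of the gap process of the Stochastic Follow-the-Leader system, acting on functions $f$ on $\mathbb{R}_+^{n-1}$ by $$\mathcal{L}_nf(\mathbf{y})=y_{n-1}\mathbb{E}_U[f(\mathbf{y}-y_{n-1}Ue_{n-1})-f(\mathbf{y})]+\sum_{i=1}^{n-2}y_i\mathbb{E}_U[f(\mathbf{y}+y_iU(e_{i+1}-e_i))-f(\mathbf{y})]+\mathbb{E}_\theta[f(\mathbf{y}+Ze_1)-f(\mathbf{y})],$$ with $U\sim\mathrm{U}(0,1)$, $Z\sim\theta$ (applied to linear functions, where the expectations are finite). *)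

From HB Require Import structures.
From mathcomp Require Import all_boot all_order all_algebra.
From mathcomp Require Import all_classical all_reals all_analysis.
Set Implicit Arguments. Unset Strict Implicit. Unset Printing Implicit Defensive.
Import Order.TTheory GRing.Theory Num.Theory.
Local Open Scope ring_scope.
Local Open Scope classical_set_scope.

(* Gap vectors y = (y_1, ..., y_m) in R^m are row vectors 'rV[R]_m;
   the paper's coordinate y_k (1 <= k <= m) is stored at ordinal k-1. *)
Definition ycoord {R : realType} {m : nat} (y : 'rV[R]_m) (k : nat) : R :=
  \sum_(j < m | j.+1 == k) y ord0 j.

(* The standard basis vector e_k (1-based; zero if k is out of range). *)
Definition ebasis {R : realType} (m k : nat) : 'rV[R]_m :=
  \row_(j < m) (if j.+1 == k then 1 else 0).

Definition EU {R : realType} (g : R -> R) : R :=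
  Rintegral (uniform_prob (@ltr01 R)) setT g.

Definition Etheta {R : realType} (theta : probability R R) (g : R -> R) : R :=
  Rintegral theta setT g.

(* Generator of the gap process of the Stochastic Follow-the-Leader system,
   acting on f : R^{n-1} -> R. *)
Definition Lgen {R : realType} (n : nat) (theta : probability R R)
    (f : 'rV[R]_n.-1 -> R) (y : 'rV[R]_n.-1) : R :=
  ycoord y n.-1 *
    EU (fun u => f (y - (ycoord y n.-1 * u) *: ebasis n.-1 n.-1) - f y)
  + \sum_(1 <= i < n.-1)
      ycoord y i *
        EU (fun u => f (y + (ycoord y i * u) *:
                           (ebasis n.-1 i.+1 - ebasis n.-1 i)) - f y)
  + Etheta theta (fun z => f (y + z *: ebasis n.-1 1) - f y).

Definition alpha {R : realType} : R := 10%:R^-1.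

Definition Vlyap {R : realType} (n : nat) (y : 'rV[R]_n.-1) : R :=
  1 + \sum_(1 <= i < n) alpha ^+ i * ycoord y i.

(* V is affine, V(y) = 1 + sum_i alpha^i y_i, so along a jump v it changes by
   sum_i alpha^i v_i; with E_U[U] = 1/2 and E_theta[Z] = 1 the generator is exact:
     L_n V(y) = alpha - alpha^(n-1) y_(n-1)^2 / 2 - (1 - alpha)/2 sum_(i<n-1) alpha^i y_i^2.
   Weakening the last coefficient to (1 - alpha) alpha^(n-1) / 2 gives the first bound.
   The second is the weighted Cauchy-Schwarz inequality
   (sum_i alpha^i y_i)^2 <= (sum_i alpha^i) (sum_i alpha^i y_i^2) with
   sum_i alpha^i <= alpha / (1 - alpha).  Any alpha in (0, 1) would do. *)

From HB Require Import structures.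
From mathcomp Require Import all_boot all_order all_algebra.
From mathcomp Require Import all_classical all_reals all_analysis.
From mathcomp Require Import measurable_realfun ring lra.
Import Order.TTheory GRing.Theory Num.Theory.
Import numFieldNormedType.Exports.
Local Open Scope ring_scope.
Local Open Scope classical_set_scope.

Section uniform01_mean.
Variable R : realType.
Local Notation U := (uniform_prob (@ltr01 R)).

Lemma lebesgue_integral_id01 :
  (\int[lebesgue_measure]_(x in `[0%R, 1%R]) x%:E = (2^-1 : R)%:E)%E.
Proof.
have dF x : derivable (fun x : R => x ^+ 2 / 2) x 1.
  by apply: derivableM => //; exact: derivableX.
have cF : continuous (fun x : R => x ^+ 2 / 2).
  by move=> x; apply/differentiable_continuous/derivable1_diffP.
rewrite (@continuous_FTC2 _ _ (fun x : R => x ^+ 2 / 2)) //.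
- by rewrite expr0n /= mul0r expr1n mul1r oppr0 adde0.
- by apply: continuous_in_subspaceT => x _; exact: cvg_id.
- split; first by move=> x _.
  + exact/cvg_at_right_filter/cF.
  + exact/cvg_at_left_filter/cF.
- move=> x _; rewrite derive1E deriveM ?derivableX //= derive_cst scaler0 add0r.
  by rewrite exp_derive /= expr1 /GRing.scale /= mulr1 mulrA mulVf ?mul1r ?pnatr_eq0.
Qed.

Lemma uniform01_integral_ge0 (f : R -> \bar R) :
  measurable_fun setT f -> (forall x, 0 <= f x)%E ->
  (\int[U]_x f x = \int[lebesgue_measure]_(x in `[0%R, 1%R]) f x)%E.
Proof. by move=> mf f0; rewrite integral_uniform // subr0 invr1 mul1e. Qed.

Lemma uniform01_integrable_id : U.-integrable setT EFin.
Proof.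
apply/integrableP; split; first exact/measurable_EFinP.
rewrite uniform01_integral_ge0 //; last exact/measurableT_comp/measurable_EFinP.
rewrite (_ : (\int[_]_(x in _) _ = \int[lebesgue_measure]_(x in `[0%R, 1%R]) x%:E)%E).
  by rewrite lebesgue_integral_id01 ltry.
by apply: eq_integral => x; rewrite inE /= in_itv /= => /andP[x0 _]; rewrite ger0_norm.
Qed.

Lemma uniform01_mean : (\int[U]_x x%:E = (2^-1 : R)%:E)%E.
Proof.
have id_ge0 : forall x : R, `[0%R, 1%R]%classic x -> (0 <= x%:E)%E.
  by move=> x; rewrite /= in_itv /= => /andP[x0 _]; rewrite lee_fin.
rewrite integralE !uniform01_integral_ge0; last 4 first.
- exact/measurable_funeneg/measurable_EFinP.
- by move=> x; exact: funeneg_ge0.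
- exact/measurable_funepos/measurable_EFinP.
- by move=> x; exact: funepos_ge0.
rewrite [X in (_ - X)%E]integral0_eq ?sube0; last first.
  by move=> x x01; apply: (ge0_funenegE id_ge0); exact: mem_set.
by rewrite -lebesgue_integral_id01; apply: eq_integral; exact: ge0_funeposE.
Qed.

Lemma EU_scale (c : R) : EU (fun u => c * u) = c / 2.
Proof.
by rewrite /EU RintegralZl ?uniform01_integrable_id // /Rintegral uniform01_mean mulrC.
Qed.

End uniform01_mean.

Lemma integrable_EFin_of_mean (R : realType) (mu : {measure set R -> \bar R}) (m : R) :
  (\int[mu]_z z%:E = m%:E)%E -> mu.-integrable setT EFin.
Proof.
move=> mean_m; apply/integrableP; split; first exact/measurable_EFinP.
rewrite (eq_integral (fun z : R => ((@EFin R)^\+ z + (@EFin R)^\- z)%E)); last first.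
  by move=> z _; have /(congr1 (fun f => f z)) := fune_abse (@EFin R).
rewrite ge0_integralD //; last 2 first.
- exact/measurable_funepos/measurable_EFinP.
- exact/measurable_funeneg/measurable_EFinP.
rewrite integralE in mean_m; move: mean_m.
have : (0 <= \int[mu]_z (@EFin R)^\+ z)%E by apply: integral_ge0 => z _; exact: funepos_ge0.
have : (0 <= \int[mu]_z (@EFin R)^\- z)%E by apply: integral_ge0 => z _; exact: funeneg_ge0.
case: (\int[mu]_z (@EFin R)^\+ z)%E => [p| |]; case: (\int[mu]_z (@EFin R)^\- z)%E => [q| |] //.
by rewrite -EFinD ltry.
Qed.

Lemma Etheta_scale (R : realType) (theta : probability R R) (m c : R) :
  (\int[theta]_z z%:E = m%:E)%E -> Etheta theta (fun z => c * z) = c * m.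
Proof.
move=> mean_m; rewrite /Etheta RintegralZl //; first by rewrite /Rintegral mean_m.
exact: integrable_EFin_of_mean mean_m.
Qed.

Definition wsum {R : realType} {m : nat} (w : nat -> R) (y : 'rV[R]_m) : R :=
  \sum_(1 <= i < m.+1) w i * ycoord y i.

Section weighted_coordinate_sums.
Variable R : realType.
Implicit Types (m : nat) (w : nat -> R).

Lemma ycoordD m (y v : 'rV[R]_m) k : ycoord (y + v) k = ycoord y k + ycoord v k.
Proof. by rewrite /ycoord -big_split; apply: eq_bigr => j _; rewrite mxE. Qed.

Lemma ycoordZ m (a : R) (v : 'rV[R]_m) k : ycoord (a *: v) k = a * ycoord v k.
Proof. by rewrite /ycoord mulr_sumr; apply: eq_bigr => j _; rewrite mxE. Qed.

Lemma ycoordE m (v : 'rV[R]_m) (j : 'I_m) : ycoord v j.+1 = v ord0 j.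
Proof. by rewrite /ycoord (big_pred1 j). Qed.

Lemma wsumD m w (y v : 'rV[R]_m) : wsum w (y + v) = wsum w y + wsum w v.
Proof. by rewrite /wsum -big_split; apply: eq_bigr => i _; rewrite ycoordD mulrDr. Qed.

Lemma wsumZ m w (a : R) (v : 'rV[R]_m) : wsum w (a *: v) = a * wsum w v.
Proof. by rewrite /wsum mulr_sumr; apply: eq_bigr => i _; rewrite ycoordZ mulrCA. Qed.

Lemma wsumB m w (y v : 'rV[R]_m) : wsum w (y - v) = wsum w y - wsum w v.
Proof. by rewrite wsumD -scaleN1r wsumZ mulN1r. Qed.

Lemma wsum_ebasis m w k : (1 <= k <= m)%N -> wsum w (ebasis m k : 'rV[R]_m) = w k.
Proof.
case: k => [|k] // /andP[_ lt_km].
rewrite /wsum big_add1 /= big_mkord; under eq_bigr do rewrite ycoordE mxE.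
rewrite (bigD1 (Ordinal lt_km)) //= eqxx mulr1 big1 ?addr0 // => j neq_jk.
by rewrite eqSS (negbTE (neq_jk : (j : nat) != k)) mulr0.
Qed.

End weighted_coordinate_sums.

Lemma Lgen_affine (R : realType) (m : nat) (theta : probability R R) (mean c : R)
    (w : nat -> R) (y : 'rV[R]_m.+1) :
  (\int[theta]_z z%:E = mean%:E)%E ->
  @Lgen R m.+2 theta (fun v => c + wsum w v) y =
    - (w m.+1 / 2 * ycoord y m.+1 ^+ 2)
    + \sum_(1 <= i < m.+1) (w i.+1 - w i) / 2 * ycoord y i ^+ 2
    + w 1%N * mean.
Proof.
move=> mean_theta; rewrite /Lgen /=.
have jump v : c + wsum w (y + v) - (c + wsum w y) = wsum w v by rewrite wsumD; ring.
have exit_jump : EU (fun u => c + wsum w (y - (ycoord y m.+1 * u) *: ebasis m.+1 m.+1)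
                              - (c + wsum w y)) = - (w m.+1 * ycoord y m.+1) / 2.
  rewrite -EU_scale; congr EU; apply/funext => u.
  by rewrite -scaleNr jump wsumZ wsum_ebasis ?leqnn //; ring.
have gap_jump i : (1 <= i < m.+1)%N ->
    EU (fun u => c + wsum w (y + (ycoord y i * u) *: (ebasis m.+1 i.+1 - ebasis m.+1 i))
                 - (c + wsum w y)) = (w i.+1 - w i) * ycoord y i / 2.
  move=> /andP[i_ge1 i_lt]; rewrite -EU_scale; congr EU; apply/funext => u.
  by rewrite jump wsumZ wsumB !wsum_ebasis ?i_ge1 ?i_lt ?(ltnW i_lt) //; ring.
have entry_jump : Etheta theta (fun z => c + wsum w (y + z *: ebasis m.+1 1) - (c + wsum w y))
                  = w 1%N * mean.
  rewrite -(@Etheta_scale R theta mean (w 1%N) mean_theta); congr Etheta; apply/funext => z.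
  by rewrite jump wsumZ wsum_ebasis // mulrC.
rewrite exit_jump entry_jump; congr (_ + _ + _); first by rewrite -mulrN; ring.
by apply: eq_big_nat => i /gap_jump ->; ring.
Qed.

Lemma geometric_sum_le (R : realType) (x : R) (N : nat) :
  0 < x < 1 -> \sum_(1 <= i < N.+1) x ^+ i <= x / (1 - x).
Proof.
case/andP => x_gt0 x_lt1; rewrite -[N.+1]add1n geometric_partial_tail expr1.
by apply: geometric_le_lim; rewrite ?ltW ?gtr0_norm.
Qed.

(* Weighted Cauchy-Schwarz; bounding the mass by K > 0 avoids dividing by a zero mass. *)
Lemma sqr_sum_weighted_le (R : realFieldType) (I : Type) (r : seq I) (a b : I -> R)
    (K : R) :
  (forall i, 0 <= a i) -> 0 < K -> \sum_(i <- r) a i <= K ->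
  (\sum_(i <- r) a i * b i) ^+ 2 <= K * \sum_(i <- r) a i * b i ^+ 2.
Proof.
move=> a_ge0 K_gt0 mass_le.
pose t := (\sum_(i <- r) a i * b i) / K.
have : 0 <= \sum_(i <- r) a i * (b i - t) ^+ 2.
  by apply: sumr_ge0 => i _; rewrite mulr_ge0 ?sqr_ge0.
have -> : \sum_(i <- r) a i * (b i - t) ^+ 2 = \sum_(i <- r) a i * b i ^+ 2
    - 2 * t * \sum_(i <- r) a i * b i + t ^+ 2 * \sum_(i <- r) a i.
  by rewrite !mulr_sumr -sumrB -big_split; apply: eq_bigr => i _ /=; ring.
have -> : \sum_(i <- r) a i * b i = t * K by rewrite divfK ?gt_eqF.
move: mass_le; set S := \sum_(i <- r) a i; set Q := \sum_(i <- r) _ * _ ^+ 2.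
move=> mass_le expansion_ge0.
have tK_le : t ^+ 2 * K <= Q by have := sqr_ge0 t; nra.
rewrite exprMn [K ^+ 2]expr2 mulrA [K * Q]mulrC.
by apply: ler_wpM2r tK_le; exact: ltW.
Qed.

Section geometric_weights.
Context {R : realType} {x : R} (x01 : 0 < x < 1).

Lemma wsum_geometric_sqr_le {m : nat} (y : 'rV[R]_m) :
  wsum (fun i => x ^+ i) y ^+ 2 <= x / (1 - x) * \sum_(1 <= i < m.+1) x ^+ i * ycoord y i ^+ 2.
Proof.
have [x_gt0 x_lt1] := andP x01.
apply: (@sqr_sum_weighted_le _ _ _ (fun i => x ^+ i) (ycoord y)).
- by move=> i; rewrite exprn_ge0 ?ltW.
- by rewrite divr_gt0 ?subr_gt0.
- exact: geometric_sum_le.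
Qed.

Lemma Lgen_geometric_le {m : nat} {theta : probability R R} (y : 'rV[R]_m.+1) :
  (\int[theta]_z z%:E = 1)%E ->
  @Lgen R m.+2 theta (fun v => 1 + wsum (fun i => x ^+ i) v) y
    <= x - (1 - x) / 2 * \sum_(1 <= i < m.+2) x ^+ i * ycoord y i ^+ 2.
Proof.
have [x_gt0 x_lt1] := andP x01.
move=> mean1; rewrite (@Lgen_affine R m theta 1 1 _ y mean1) expr1 mulr1.
rewrite [X in _ <= _ - _ * X]big_nat_recr //= mulrDr.
have -> : \sum_(1 <= i < m.+1) (x ^+ i.+1 - x ^+ i) / 2 * ycoord y i ^+ 2
    = - ((1 - x) / 2 * \sum_(1 <= i < m.+1) x ^+ i * ycoord y i ^+ 2).
  by rewrite mulr_sumr -sumrN; apply: eq_bigr => i _; rewrite exprS; ring.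
set Q := \sum_(1 <= i < m.+1) _; set P := x ^+ m.+1.
have P_ge0 : 0 <= P by rewrite exprn_ge0 ?ltW.
have := mulr_ge0 (mulr_ge0 P_ge0 (sqr_ge0 (ycoord y m.+1))) (ltW x_gt0).
nra.
Qed.

Lemma Lgen_geometric_le_sqr {m : nat} {theta : probability R R} (y : 'rV[R]_m.+1) :
  (\int[theta]_z z%:E = 1)%E ->
  @Lgen R m.+2 theta (fun v => 1 + wsum (fun i => x ^+ i) v) y
    <= x - (1 - x) ^+ 2 / (2 * x) * wsum (fun i => x ^+ i) y ^+ 2.
Proof.
have [x_gt0 x_lt1] := andP x01.
move=> mean1; apply: (le_trans (Lgen_geometric_le y mean1)); rewrite lerD2l lerN2.
have c_ge0 : 0 <= (1 - x) ^+ 2 / (2 * x) by rewrite divr_ge0 ?sqr_ge0 ?mulr_ge0 ?ltW.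
apply: (le_trans (ler_wpM2l c_ge0 (wsum_geometric_sqr_le y))); rewrite mulrA.
rewrite (_ : (1 - x) ^+ 2 / (2 * x) * (x / (1 - x)) = (1 - x) / 2) //.
by field; rewrite subr_eq0 !gt_eqF.
Qed.

End geometric_weights.

Lemma alpha_itv (R : realType) : 0 < (alpha : R) < 1.
Proof. by rewrite /alpha invr_gt0 ltr0n invf_lt1 ?ltr0n ?ltr1n. Qed.

Theorem mainTheorem10 (R : realType) (n : nat) (theta : probability R R) :
  (2 <= n)%N ->
  theta `]-oo, 0] = 0%E ->
  (\int[theta]_z (z%:E) = 1)%E ->
  forall y : 'rV[R]_n.-1,
    (forall j, 0 <= y ord0 j) ->
    @Lgen R n theta (@Vlyap R n) y
      <= alpha - (1 - alpha) / 2%:R *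
                 \sum_(1 <= i < n) alpha ^+ i * ycoord y i ^+ 2
    /\
    @Lgen R n theta (@Vlyap R n) y
      <= alpha - (1 - alpha) ^+ 2 / (2%:R * alpha) * (@Vlyap R n y - 1) ^+ 2.
Proof.
case: n => [|[|m]] // _ _ mean1 y _.
have -> : @Vlyap R m.+2 = fun v => 1 + wsum (fun i => alpha ^+ i) v by [].
rewrite [1 + wsum _ y]addrC addrK; split.
- exact: (Lgen_geometric_le (alpha_itv R) y mean1).
- exact: (Lgen_geometric_le_sqr (alpha_itv R) y mean1).
Qed.
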